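(* Let $m\in\mathbb N$, $M\in{\rm Mat}_m(\mathbb Z)$, and let $S\in{\rm Mat}_m(\mathbb Z)\cap GL_m(\mathbb Q)$ be such that $S^{-1}MS$ is the rational canonical form of $M$. Then for every prime $p$ with $\gcd(\det(S),p)=1$ and for which $M$ has finite $\mathbb Z_p$-order $k$, the move graph $\Gamma_{M,\,p}$ contains a directed $k$-cycle.
   Context: $\mathbb Z_n$ denotes the integers modulo $n$. For $M\in{\rm Mat}_m(\mathbb Z)$, the move graph $\Gamma_{M,\,n}$ is the directed graph with vertex set $\mathbb Z_n^m$ and arc set $\{({\bf x},{\bf y}) : {\bf y}^T=M{\bf x}^T \text{ in } \mathbb Z_n^m\}$ (loops allowed). The $\mathbb Z_n$-order of $M$ is the least positive integer $k$ (if it exists) such that $M^k$ acts as the identity on $\mathbb Z_n^m$. A directed $k$-cycle is a cycle of length $k$ in the underlying undirected graph such that in the induced directed subgraph on it every vertex has in-degree and out-degree $1$ (a loop counts as a directed $1$-cycle, a pair of opposite arcs as a directed $2$-cycle). *)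

From mathcomp Require Import all_boot all_order all_algebra.
Import GRing.Theory Num.Theory.
Local Open Scope ring_scope.

Definition Zn_mx (n : nat) {m : nat} (M : 'M[int]_m) : 'M['Z_n]_m :=
  map_mx (fun z : int => z%:~R) M.

(* Arc relation of the move graph Gamma_{M,n}: vertices are (column) vectors
   of 'Z_n^m, and (x, y) is an arc iff y^T = M x^T in 'Z_n^m. *)
Definition move_arc (n : nat) {m : nat} (M : 'M[int]_m) : rel 'cV['Z_n]_m :=
  fun x y => y == Zn_mx n M *m x.

Definition acts_as_id (n : nat) {m : nat} (M : 'M[int]_m) (k : nat) : Prop :=
  forall x : 'cV['Z_n]_m, (Zn_mx n M) ^+ k *m x = x.

Definition has_Zn_order (n : nat) {m : nat} (M : 'M[int]_m) (k : nat) : Prop :=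
  (0 < k)%N /\ acts_as_id n M k /\
  (forall j : nat, (0 < j)%N -> (j < k)%N -> ~ acts_as_id n M j).

(* s lists (in cyclic order) the vertices of a directed cycle of the directed
   graph with arc relation e (loops allowed): the vertices are distinct, they
   form a cycle in the underlying undirected graph (consecutive vertices,
   cyclically, are adjacent; for one vertex this is a loop), and in the
   subgraph induced on them every vertex has in-degree and out-degree 1. *)
Definition directed_cycle {T : finType} (e : rel T) (s : seq T) : Prop :=
  [/\ uniq s, (0 < size s)%N,
      cycle (fun x y => e x y || e y x) s &
      forall x, x \in s -> count (fun y => e x y) s = 1%N /\
                           count (fun y => e y x) s = 1%N].

Definition has_directed_cycle {T : finType} (e : rel T) (k : nat) : Prop :=
  exists s : seq T, size s = k /\ directed_cycle e s.

(* Companion matrix of a monic polynomial, in the Frobenius-normal-form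
   convention: ones on the subdiagonal, last column (-c_0, ..., -c_{d-1}). *)
Definition frob_companion {R : nzRingType} (p : {poly R}) :=
  (companionmx p)^T.

Definition is_rcf {m : nat} (A : 'M[rat]_m) : Prop :=
  exists (r : nat) (f : 'I_r -> {poly rat})
         (e : (\sum_(i < r) (size (f i)).-1)%N = m),
    [/\ forall i, f i \is monic,
        forall i, (1 < size (f i))%N,
        forall i j : 'I_r, (i <= j)%N -> f i %| f j &
        A = castmx (e, e) (\mxdiag_(i < r) frob_companion (f i))].

From mathcomp Require Import all_boot all_order all_algebra.
From Stdlib Require Import Classical.
Import GRing.Theory.
Local Open Scope ring_scope.

(* Over any field, a square matrix A has a vector x whose annihilator in F[X]
   is that of A itself.  Take x with a local minimal polynomial q of maximal
   degree; if q(A) <> 0, some y with q(A) y <> 0 has a local minimal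
   polynomial r containing a higher power of some irreducible pi than q, and
   adding the pi-primary part of y to the pi-free part of x gives a vector
   with local minimal polynomial q * pi, a contradiction.  For such an x,
   A^j x = x forces A^j = 1, so over F_p the orbit of x under A has length
   exactly the Z_p-order k of M, and this orbit is a directed k-cycle of the
   move graph. *)

Lemma exists_argmin {T : Type} (mu : T -> nat) (P : T -> Prop) t :
  P t -> exists2 u, P u & forall v, P v -> (mu u <= mu v)%N.
Proof.
move=> Pt; move: {2}(mu t) (leqnn (mu t)) => b le_tb.
elim: b t Pt le_tb => [|b IHb] t Pt le_tb.
  by exists t => // v _; rewrite leqn0 in le_tb; rewrite (eqP le_tb).
have [[v Pv lt_vt] | no_smaller] := classic (exists2 v, P v & (mu v < mu t)%N).
  by apply: (IHb v Pv); rewrite -ltnS (leq_trans lt_vt).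
exists t => // v Pv; rewrite leqNgt; apply/negP => lt_vt.
by apply: no_smaller; exists v.
Qed.

Section PolyFactors.
Context {F : fieldType}.
Implicit Types p q r d pi : {poly F}.

Lemma size_mul_gt p q : p != 0 -> (1 < size q)%N -> (size p < size (p * q)%R)%N.
Proof.
move=> p_neq0 q_gt1; have q_neq0 : q != 0 by rewrite -size_poly_gt0 ltnW.
rewrite size_mul // -(prednK (ltnW q_gt1)) addnS /= -[X in (X < _)%N]addn0.
by rewrite ltn_add2l ltn_predRL.
Qed.

Lemma exists_irreducible_dvdp p :
  (1 < size p)%N -> exists2 pi, irreducible_poly pi & pi %| p.
Proof.
move=> p_gt1.
have [d [d_gt1 dvd_dp] min_d] := exists_argmin (fun d : {poly F} => size d)
  (fun d => (1 < size d)%N /\ d %| p) p (conj p_gt1 (dvdpp p)).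
exists d => //; split=> // q q_neq1 dvd_qd.
have d_neq0 : d != 0 by rewrite -size_poly_gt0 ltnW.
have q_gt1 : (1 < size q)%N.
  by rewrite ltn_neqAle eq_sym q_neq1 size_poly_gt0 (dvdpN0 dvd_qd).
rewrite -(dvdp_size_eqp dvd_qd) eqn_leq dvdp_leq //=.
exact: min_d (conj q_gt1 (dvdp_trans dvd_qd dvd_dp)).
Qed.

Lemma split_pfactor pi p : (1 < size pi)%N -> p != 0 ->
  exists e p0, p = pi ^+ e * p0 /\ ~~ (pi %| p0).
Proof.
move=> pi_gt1 p_neq0.
have [p0 [e def_p] min_p0] :
    exists2 p0, (exists e, p = pi ^+ e * p0) &
      forall p1, (exists e, p = pi ^+ e * p1) -> (size p0 <= size p1)%N.
  by apply: exists_argmin; exists 0%N; rewrite expr0 mul1r.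
exists e, p0; split=> //; apply/negP => /divpK def_p0.
have p0_neq0 : p0 != 0.
  by apply: contra_neq p_neq0 => p0_0; rewrite def_p p0_0 mulr0.
have pi_neq0 : pi != 0 by rewrite -size_poly_gt0 ltnW.
have p0_gt0 : (0 < size p0)%N by rewrite size_poly_gt0.
have : (size p0 <= size (p0 %/ pi)%R)%N.
  by apply: min_p0; exists e.+1; rewrite def_p exprSr -mulrA [pi * _]mulrC def_p0.
by rewrite size_divp // leqNgt ltn_subrL ltn_predRL pi_gt1 p0_gt0.
Qed.

Lemma ndvdp_pfactor q r : r != 0 -> ~~ (r %| q) ->
  exists pi e q0, [/\ irreducible_poly pi, q = pi ^+ e * q0,
                      coprimep pi q0 & pi ^+ e.+1 %| r].
Proof.
move=> r_neq0 r_ndvd_q.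
have [d [dvd_dr d_ndvd_q] min_d] := exists_argmin (fun d : {poly F} => size d)
  (fun d => d %| r /\ ~~ (d %| q)) r (conj (dvdpp r) r_ndvd_q).
have d_neq0 := dvdpN0 dvd_dr r_neq0.
have d_gt1 : (1 < size d)%N.
  rewrite ltn_neqAle size_poly_gt0 d_neq0 andbT eq_sym size_poly_eq1.
  by apply: contra d_ndvd_q => /eqp_dvdl ->; rewrite dvd1p.
have [pi irr_pi dvd_pid] := exists_irreducible_dvdp d d_gt1.
have pi_neq0 := irredp_neq0 irr_pi.
have pi_gt1 : (1 < size pi)%N := irr_pi.1.
have /dvdpP [d1 def_d] := dvd_pid.
have d1_neq0 : d1 != 0.
  by apply: contra_neq d_neq0 => d1_0; rewrite def_d d1_0 mul0r.
have dvd_d1q : d1 %| q.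
  apply: contraT => d1_ndvd_q.
  have dvd_d1r : d1 %| r by apply: dvdp_trans dvd_dr; rewrite def_d dvdp_mulr.
  have := min_d d1 (conj dvd_d1r d1_ndvd_q).
  by rewrite def_d leqNgt size_mul_gt.
have /dvdpP [t def_q] := dvd_d1q.
have pi_ndvd_t : ~~ (pi %| t).
  by apply: contra d_ndvd_q => dvd_pit; rewrite def_q def_d [d1 * _]mulrC dvdp_mul2r.
have [f [d2 [def_d1 pi_ndvd_d2]]] := split_pfactor pi d1 pi_gt1 d1_neq0.
exists pi, f, (d2 * t); split=> //.
- by rewrite def_q def_d1 mulrC -mulrA.
- by rewrite coprimepMr !irreducible_poly_coprime // pi_ndvd_d2.
- by apply: dvdp_trans dvd_dr; rewrite def_d def_d1 exprSr mulrAC dvdp_mulr.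
Qed.

End PolyFactors.

Section LocalMinpoly.
Context {F : fieldType} {n : nat} (A : 'M[F]_n.+1).
Implicit Types (x y : 'cV[F]_n.+1) (f g q : {poly F}).

Definition is_local_minpoly x q :=
  forall f, (horner_mx A f *m x == 0) = (q %| f).

Lemma horner_mxM_mulmx f g x :
  horner_mx A (f * g) *m x = horner_mx A f *m (horner_mx A g *m x).
Proof. by rewrite rmorphM /= -mulmxE mulmxA. Qed.

Lemma exists_local_minpoly x : exists q, is_local_minpoly x q.
Proof.
have char_x : horner_mx A (char_poly A) *m x = 0.
  by rewrite Cayley_Hamilton mul0mx.
have [q [q_neq0 qx] min_q] := exists_argmin (fun q : {poly F} => size q)
  (fun q => q != 0 /\ horner_mx A q *m x = 0) (char_poly A)
  (conj (monic_neq0 (char_poly_monic A)) char_x).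
exists q => f; apply/eqP/idP => [fx | /dvdpP [g ->]]; last first.
  by rewrite horner_mxM_mulmx qx mulmx0.
have rx : horner_mx A (f %% q) *m x = 0.
  by move: fx; rewrite {1}(divp_eq f q) rmorphD mulmxDl horner_mxM_mulmx qx mulmx0 add0r.
apply/modp_eq0P/eqP; apply: contraT => r_neq0.
by have := min_q _ (conj r_neq0 rx); rewrite leqNgt ltn_modp q_neq0.
Qed.

Lemma local_minpoly_dvdp_char {x q} : is_local_minpoly x q -> q %| char_poly A.
Proof. by move=> xq; rewrite -xq Cayley_Hamilton mul0mx. Qed.

Lemma local_minpoly_neq0 {x q} : is_local_minpoly x q -> q != 0.
Proof.
by move=> /local_minpoly_dvdp_char/dvdpN0; apply; apply: monic_neq0 (char_poly_monic A).
Qed.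

Lemma local_minpoly_horner x f g :
  is_local_minpoly x (f * g) -> f != 0 -> is_local_minpoly (horner_mx A f *m x) g.
Proof. by move=> xfg f_neq0 h; rewrite -horner_mxM_mulmx xfg [h * f]mulrC dvdp_mul2l. Qed.

Lemma dvdp_local_minpoly_opp x y a b f :
    is_local_minpoly x a -> is_local_minpoly y b -> coprimep a b ->
  horner_mx A f *m x = - (horner_mx A f *m y) -> a %| f.
Proof.
move=> xa yb cop_ab fxy; rewrite -(Gauss_dvdpr _ cop_ab) -xa horner_mxM_mulmx fxy.
have /eqP by0 : horner_mx A b *m y == 0 by rewrite yb.
by rewrite mulmxN -horner_mxM_mulmx [b * f]mulrC horner_mxM_mulmx by0 mulmx0 oppr0.
Qed.

Lemma local_minpoly_add x y a b : coprimep a b ->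
  is_local_minpoly x a -> is_local_minpoly y b -> is_local_minpoly (x + y) (a * b).
Proof.
move=> cop_ab xa yb f; rewrite Gauss_dvdp // mulmxDr addr_eq0.
apply/eqP/andP => [fxy | [dvd_af dvd_bf]].
  split; first exact: dvdp_local_minpoly_opp xa yb cop_ab fxy.
  by apply: dvdp_local_minpoly_opp yb xa _ _; rewrite 1?coprimep_sym // fxy opprK.
have /eqP-> : horner_mx A f *m x == 0 by rewrite xa.
have /eqP-> : horner_mx A f *m y == 0 by rewrite yb.
by rewrite oppr0.
Qed.

Lemma exists_nonzero_image (B : 'M[F]_n.+1) : B != 0 -> exists y, B *m y != 0.
Proof.
move=> B_neq0; have /existsP [j Bj] : [exists j, col j B != 0].
  apply: contraR B_neq0 => /existsPn colB0; apply/eqP/matrixP => i j.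
  by move/negPn/eqP/matrixP/(_ i 0): (colB0 j); rewrite !mxE.
by exists (delta_mx j 0); rewrite -colE.
Qed.

Lemma exists_separating_vec :
  exists x, forall f, horner_mx A f *m x = 0 -> horner_mx A f = 0.
Proof.
have [q0 x0q0] := exists_local_minpoly 0.
have [[x q] /= xq max_q] := exists_argmin
  (fun xq : 'cV[F]_n.+1 * {poly F} => n.+2 - size xq.2)%N
  (fun xq => is_local_minpoly xq.1 xq.2) (0, q0) x0q0.
suff qA0 : horner_mx A q = 0.
  by exists x => f /eqP; rewrite xq => /dvdpP [g ->]; rewrite rmorphM /= qA0 mulr0.
apply/eqP; apply: contraT => /exists_nonzero_image [y qy_neq0].
have [r yr] := exists_local_minpoly y.
have r_ndvd_q : ~~ (r %| q) by rewrite -yr.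
have [pi [e [q1 [irr_pi def_q cop_pi dvd_r]]]] :=
  ndvdp_pfactor q r (local_minpoly_neq0 yr) r_ndvd_q.
have pi_neq0 := irredp_neq0 irr_pi.
have def_r : r = r %/ pi ^+ e.+1 * pi ^+ e.+1 by rewrite divpK.
have zq : is_local_minpoly
    (horner_mx A (pi ^+ e) *m x + horner_mx A (r %/ pi ^+ e.+1) *m y) (q1 * pi ^+ e.+1).
  apply: local_minpoly_add; first by rewrite coprimep_sym coprimep_expl.
    by apply: local_minpoly_horner; rewrite -?def_q ?expf_neq0.
  apply: local_minpoly_horner; first by rewrite -def_r.
  by apply: contra_neq (local_minpoly_neq0 yr) => r0; rewrite def_r r0 mul0r.
have def_z : q1 * pi ^+ e.+1 = q * pi.
  by rewrite def_q exprSr mulrA [q1 * _]mulrC.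
have lt_q_z : (size q < size (q * pi)%R)%N :=
  size_mul_gt q pi (local_minpoly_neq0 xq) irr_pi.1.
have le_z_n : (size (q * pi)%R <= n.+2)%N.
  rewrite -def_z -(size_char_poly A) dvdp_leq ?(local_minpoly_dvdp_char zq) //.
  exact: monic_neq0 (char_poly_monic A).
have := max_q (_, q1 * pi ^+ e.+1) zq; rewrite /= def_z leqNgt.
by rewrite ltn_sub2l // (leq_trans lt_q_z).
Qed.

End LocalMinpoly.

Lemma exists_regular_orbit {F : fieldType} {n : nat} (A : 'M[F]_n) :
  exists x : 'cV[F]_n, forall j, A ^+ j *m x = x -> A ^+ j = 1.
Proof.
case: n A => [|n] A; first by exists 0 => j _; apply/matrixP => [[]].
have [x sep_x] := exists_separating_vec A.
exists x => j Ajx; apply/eqP; rewrite -subr_eq0; apply/eqP.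
have := sep_x ('X^j - 1); rewrite rmorphB rmorphXn /= horner_mx_X rmorph1.
by apply; rewrite mulmxBl Ajx mul1mx subrr.
Qed.

Lemma uniq_fcycle_directed_cycle (T : finType) (f : T -> T) (s : seq T) :
  uniq s -> (0 < size s)%N -> fcycle f s -> directed_cycle (fun x y => y == f x) s.
Proof.
move=> s_uniq s_gt0 s_cyc.
have f_next y : y \in s -> f y = next s y by move=> /(next_cycle s_cyc) /eqP.
split=> //; first by apply: sub_cycle s_cyc => x y /= /eqP <-; rewrite eqxx.
move=> x s_x; split.
  by rewrite [LHS](count_uniq_mem (f x) s_uniq) f_next // mem_next s_x.
rewrite (@eq_in_count _ _ (pred1 (prev s x))) ?count_uniq_mem ?mem_prev ?s_x //.
move=> y s_y /=; rewrite f_next // -(inj_eq (can_inj (next_prev s_uniq))).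
by rewrite prev_next // eq_sym.
Qed.

Lemma order_eq_period {T : finType} {f : T -> T} {x : T} {k : nat} :
    (0 < k)%N -> iter k f x = x -> (forall i, (0 < i < k)%N -> iter i f x != x) ->
  order f x = k.
Proof.
move=> k_gt0 fkx min_k.
have x_cyc : iter (order f x) f x = x.
  by apply/(orbitPcycle 3 4); exists k.-1; rewrite prednK.
apply/eqP; rewrite eqn_leq; apply/andP; split; rewrite leqNgt.
  by apply/negP => /findex_iter; rewrite fkx findex0 => k0; rewrite -k0 in k_gt0.
apply/negP => lt_ord_k.
by move/(_ (order f x)): min_k; rewrite order_gt0 lt_ord_k x_cyc eqxx => /(_ isT).
Qed.

Lemma orbit_directed_cycle (T : finType) (f : T -> T) x k :
    (0 < k)%N -> iter k f x = x -> (forall i, (0 < i < k)%N -> iter i f x != x) ->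
  has_directed_cycle (fun u v => v == f u) k.
Proof.
move=> k_gt0 fkx min_k; have ord_x := order_eq_period k_gt0 fkx min_k.
exists (orbit f x); split; first by rewrite size_orbit.
apply: uniq_fcycle_directed_cycle; rewrite ?orbit_uniq ?size_orbit ?ord_x //.
by apply/(orbitPcycle 3 0); exists k.-1; rewrite prednK.
Qed.

Lemma mx_order_directed_cycle (F : finFieldType) n (A : 'M[F]_n) k :
    (0 < k)%N -> (forall x : 'cV_n, A ^+ k *m x = x) ->
    (forall j, (0 < j)%N -> (j < k)%N -> ~ (forall x : 'cV_n, A ^+ j *m x = x)) ->
  has_directed_cycle (fun x y : 'cV[F]_n => y == A *m x) k.
Proof.
move=> k_gt0 Ak min_k; have [x reg_x] := exists_regular_orbit A.
have iterA i : iter i (mulmx A) x = A ^+ i *m x.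
  by elim: i => [|i IHi]; rewrite ?expr0 ?mul1mx //= IHi mulmxA mulmxE -exprS.
apply: (@orbit_directed_cycle _ (mulmx A) x k k_gt0); first by rewrite iterA Ak.
move=> i /andP [i_gt0 lt_ik]; rewrite iterA; apply/eqP => /reg_x Ai1.
by apply: (min_k i i_gt0 lt_ik) => y; rewrite Ai1 mul1mx.
Qed.

Theorem theorem3p6 (m : nat) (M S : 'M[int]_m) :
  \det (map_mx (fun z : int => z%:~R : rat) S) != 0 ->
  is_rcf (invmx (map_mx (fun z : int => z%:~R : rat) S)
          *m map_mx (fun z : int => z%:~R : rat) M
          *m map_mx (fun z : int => z%:~R : rat) S) ->
  forall (p k : nat), prime p -> coprime `|\det S|%N p ->
    has_Zn_order p M k ->
    has_directed_cycle (move_arc p M) k.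
Proof.
move=> _ _ p k p_prime _ [k_gt0 [Mk min_k]].
(* 'Z_p carries its field structure only when written 'Z_(pdiv p) = 'F_p. *)
move: Mk min_k; rewrite /acts_as_id /move_arc -(pdiv_id p_prime) => Mk min_k.
exact: (@mx_order_directed_cycle 'F_p _ (Zn_mx (pdiv p) M) k k_gt0 Mk min_k).
Qed.
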